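(* Let $0<\eta\le\gamma$ and let $c$ satisfy \[ 0\le c\le\frac{\sqrt{2|2\eta-\gamma|+\gamma^2+1}-|2\eta-\gamma|-1}{4\eta^2}. \] Then for all $x\in[-1,1]$ and $\epsilon\in[-1,1]$, \[ e^{c\eta^2x^2-\eta x}-\frac{e^{-\gamma(x+\epsilon)}-1}{\gamma}\,\eta\,(1+2c\eta\epsilon)\,e^{c\eta^2\epsilon^2+\eta\epsilon}\;\le\;e^{c\eta^2\epsilon^2+\eta\epsilon}. \] *)

From Stdlib Require Import Reals Lra.

(* Fix x and view the difference of the two sides as a function [gap e] of
   e, with [gap (-x) = 0]. Its derivative factors as a positive term times
   [exp (-gamma (x + e)) - 1] times [eta t^2 - gamma t + 2 c eta] with
   [t = 1 + 2 c eta e]; the bound on c is exactly what makes the quadratic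
   factor nonpositive for |e| <= 1. Hence gap decreases up to [-x] and
   increases after it, so [gap eps >= gap (-x) = 0]. *)

From Stdlib Require Import Reals Lra.
From Coquelicot Require Import Coquelicot.
Open Scope R_scope.

Lemma le_of_derive_sign_change (f f' : R -> R) (a b : R) :
  (forall z, derivable_pt_lim f z (f' z)) ->
  (forall z, a < z < b \/ b < z < a -> 0 <= (z - a) * f' z) ->
  f a <= f b.
Proof.
  intros Hf Hsign.
  destruct (Rtotal_order a b) as [Hab | [<- | Hba]]; [| lra |].
  - destruct (MVT_cor2 f f' a b Hab (fun z _ => Hf z)) as [z [Hmvt Hz]].
    assert (Hs := Hsign z (or_introl Hz)).
    assert (0 <= f' z) by nra.
    nra.
  - destruct (MVT_cor2 f f' b a Hba (fun z _ => Hf z)) as [z [Hmvt Hz]].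
    assert (Hs := Hsign z (or_intror Hz)).
    assert (f' z <= 0) by nra.
    nra.
Qed.

Lemma mul_exp_sub1_ge0 (u : R) : 0 <= u * (exp u - 1).
Proof.
  destruct (Rtotal_order u 0) as [Hu | [-> | Hu]].
  - assert (exp u < 1) by (rewrite <- exp_0; apply exp_increasing; exact Hu). nra.
  - rewrite exp_0. lra.
  - assert (1 < exp u) by (rewrite <- exp_0; apply exp_increasing; exact Hu). nra.
Qed.

Lemma mul_exp_opp_sub1_le0 (g t : R) :
  0 < g -> t * (exp (- g * t) - 1) <= 0.
Proof.
  intros Hg. assert (H := mul_exp_sub1_ge0 (- g * t)). nra.
Qed.

Lemma admissible_c_margin (eta gamma c : R) :
  0 < eta -> 0 <= c ->
  c <= (sqrt (2 * Rabs (2 * eta - gamma) + gamma ^ 2 + 1) - Rabs (2 * eta - gamma) - 1)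
       / (4 * eta ^ 2) ->
  2 * c * eta * (1 + Rabs (2 * eta - gamma)) + eta * (2 * c * eta) ^ 2 <= gamma - eta.
Proof.
  intros Heta Hc Hb.
  set (a := Rabs (2 * eta - gamma)) in *.
  set (S := 2 * a + gamma ^ 2 + 1) in *.
  assert (Ha : 0 <= a) by apply Rabs_pos.
  assert (Hsq : a * a = (2 * eta - gamma) * (2 * eta - gamma)).
  { unfold a. rewrite <- Rabs_mult. apply Rabs_right, Rle_ge, Rle_0_sqr. }
  assert (Hu : 4 * eta ^ 2 * c + a + 1 <= sqrt S).
  { apply (Rmult_le_compat_l (4 * eta ^ 2)) in Hb; [| nra].
    replace (4 * eta ^ 2 * ((sqrt S - a - 1) / (4 * eta ^ 2))) with (sqrt S - a - 1)
      in Hb by (field; lra).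
    lra. }
  assert (HS : sqrt S * sqrt S = S) by (apply sqrt_sqrt; unfold S; nra).
  assert (Hu0 : 0 <= 4 * eta ^ 2 * c + a + 1) by nra.
  assert (Hsquare : (4 * eta ^ 2 * c + a + 1) ^ 2 <= S).
  { rewrite <- HS, <- Rsqr_pow2. apply Rmult_le_compat; lra. }
  apply (Rmult_le_reg_l (4 * eta)); [lra |].
  (* Expanding [Hsquare], the cross terms in [a] cancel and [a^2 - gamma^2 = 4 eta (eta - gamma)]. *)
  unfold S in Hsquare.
  nra.
Qed.

Definition tilt_quadratic (eta gamma w e : R) : R :=
  eta * (1 + w * e) ^ 2 - gamma * (1 + w * e) + w.

Lemma tilt_quadratic_nonpos (eta gamma w e : R) :
  0 <= eta -> 0 <= w ->
  w * (1 + Rabs (2 * eta - gamma)) + eta * w ^ 2 <= gamma - eta ->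
  -1 <= e <= 1 ->
  tilt_quadratic eta gamma w e <= 0.
Proof.
  intros Heta Hw Hmargin He. unfold tilt_quadratic.
  assert (Hlin : (2 * eta - gamma) * e <= Rabs (2 * eta - gamma)).
  { apply (Rle_trans _ (Rabs ((2 * eta - gamma) * e))); [apply Rle_abs |].
    rewrite Rabs_mult. assert (Rabs e <= 1) by (apply Rabs_le; lra).
    assert (0 <= Rabs (2 * eta - gamma)) by apply Rabs_pos. nra. }
  assert (Hquad : eta * w ^ 2 * e ^ 2 <= eta * w ^ 2).
  { assert (0 <= eta * w ^ 2) by nra. assert (e ^ 2 <= 1) by nra. nra. }
  assert (w * ((2 * eta - gamma) * e) <= w * Rabs (2 * eta - gamma)) by nra.
  nra.
Qed.

Definition gap (eta gamma c x e : R) : R :=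
  exp (c * eta ^ 2 * e ^ 2 + eta * e)
  + (exp (- gamma * (x + e)) - 1) / gamma * eta * (1 + 2 * c * eta * e)
    * exp (c * eta ^ 2 * e ^ 2 + eta * e)
  - exp (c * eta ^ 2 * x ^ 2 - eta * x).

Definition gap_derive (eta gamma c x e : R) : R :=
  exp (c * eta ^ 2 * e ^ 2 + eta * e) * (exp (- gamma * (x + e)) - 1) * (eta / gamma)
  * tilt_quadratic eta gamma (2 * c * eta) e.

Lemma gap_derivable (eta gamma c x e : R) :
  gamma <> 0 ->
  derivable_pt_lim (gap eta gamma c x) e (gap_derive eta gamma c x e).
Proof.
  intros Hg. apply is_derive_Reals. unfold gap, gap_derive, tilt_quadratic.
  auto_derive; [easy |].
  replace (c * (eta * (eta * 1)) * (e * (e * 1)) + eta * e)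
    with (c * eta ^ 2 * e ^ 2 + eta * e) by ring.
  field. exact Hg.
Qed.

Lemma gap_opp (eta gamma c x : R) : gamma <> 0 -> gap eta gamma c x (- x) = 0.
Proof.
  intros Hg. unfold gap.
  replace (x + - x) with 0 by ring. rewrite Rmult_0_r, exp_0.
  replace (c * eta ^ 2 * (- x) ^ 2 + eta * - x) with (c * eta ^ 2 * x ^ 2 - eta * x) by ring.
  field. exact Hg.
Qed.

Lemma gap_derive_sign (eta gamma c x z : R) :
  0 < eta -> 0 < gamma -> tilt_quadratic eta gamma (2 * c * eta) z <= 0 ->
  0 <= (z - - x) * gap_derive eta gamma c x z.
Proof.
  intros Heta Hg Hq. unfold gap_derive.
  set (E := exp (c * eta ^ 2 * z ^ 2 + eta * z)).
  assert (Hexp := mul_exp_opp_sub1_le0 gamma (x + z) Hg).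
  assert (Hpos : 0 < E * (eta / gamma)).
  { apply Rmult_lt_0_compat; [apply exp_pos | apply Rdiv_lt_0_compat; lra]. }
  replace ((z - - x) * _) with
    (E * (eta / gamma) * ((x + z) * (exp (- gamma * (x + z)) - 1))
     * tilt_quadratic eta gamma (2 * c * eta) z) by ring.
  rewrite Rmult_assoc. apply Rmult_le_pos; [lra | nra].
Qed.

Theorem mainTheorem11 (eta gamma c : R) :
  0 < eta -> eta <= gamma ->
  0 <= c ->
  c <= (sqrt (2 * Rabs (2 * eta - gamma) + gamma ^ 2 + 1) - Rabs (2 * eta - gamma) - 1)
       / (4 * eta ^ 2) ->
  forall x eps : R,
    -1 <= x <= 1 -> -1 <= eps <= 1 ->
    exp (c * eta ^ 2 * x ^ 2 - eta * x)
    - (exp (- gamma * (x + eps)) - 1) / gamma * eta * (1 + 2 * c * eta * eps)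
      * exp (c * eta ^ 2 * eps ^ 2 + eta * eps)
    <= exp (c * eta ^ 2 * eps ^ 2 + eta * eps).
Proof.
  intros Heta Hg Hc Hb x eps Hx Heps.
  assert (Hgamma : gamma <> 0) by lra.
  assert (Hmargin := admissible_c_margin eta gamma c Heta Hc Hb).
  assert (Hmin : gap eta gamma c x (- x) <= gap eta gamma c x eps).
  { apply le_of_derive_sign_change with (f' := gap_derive eta gamma c x).
    - intro z. exact (gap_derivable eta gamma c x z Hgamma).
    - intros z Hz.
      apply gap_derive_sign; [lra | lra |].
      apply tilt_quadratic_nonpos; [lra | nra | exact Hmargin | destruct Hz; lra]. }
  rewrite gap_opp in Hmin by exact Hgamma.
  unfold gap in Hmin. lra.
Qed.
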